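(* If \(G\) admits a centroid map, then it has property RD.
   Context: \(G\) is a finitely generated group with a word-length \(\ell\), \(B_{G}(r)=\{g:\ell(g)\leq r\}\). \(G\) acts by isometries on a metric space \((X,d)\) with uniformly bounded stabilizers. A centroid map is a map \(m\colon G^{2}\to X\) such that for some polynomial \(P\): (1) \(\lvert m(B_{G}(r)\times\{h\})\rvert\leq P(r)\) for all \(h\in G\); (2) \(\lvert m(\{g\}\times G)\rvert\leq P(r)\) for all \(g\in B_{G}(r)\); (3) \(\lvert\{g^{-1}m(g,gh):g\in B_{G}(r)\}\rvert\leq P(r)\) for all \(h\in G\). Property RD means there is a polynomial \(Q\) with \(\lVert f\rVert_{op}\leq Q(\ell(f))\lVert f\rVert_{2}\) for all \(f\in\mathbb{C}[G]\), where \(\ell(f)=\max\{\ell(x):f(x)\neq0\}\), \(\lVert f\rVert_{2}\) is the \(\ell^{2}\)-norm and \(\lVert f\rVert_{op}\) the operator norm of convolution by \(f\) on \(\ell^{2}(G)\). *)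

From HB Require Import structures.
From mathcomp Require Import all_boot all_order all_algebra.
From mathcomp Require Import all_classical all_reals all_analysis.
From mathcomp Require Import complex.
From Stdlib Require Import ClassicalEpsilon.
Set Implicit Arguments. Unset Strict Implicit. Unset Printing Implicit Defensive.
Import Order.TTheory GRing.Theory Num.Theory.
Local Open Scope classical_set_scope.
Local Open Scope ring_scope.

Record is_group (G : Type) (mul : G -> G -> G) (inv : G -> G) (one : G) : Prop := {
  grp_assoc : forall x y z, mul x (mul y z) = mul (mul x y) z;
  grp_mul1 : forall x, mul one x = x;
  grp_mulV : forall x, mul (inv x) x = one }.

Section Word.
Variables (G : Type) (mul : G -> G -> G) (inv : G -> G) (one : G) (S : seq G).

Definition letter (s : G) : Prop := List.In s S \/ List.In (inv s) S.
Definition word_prod (w : seq G) : G := foldr mul one w.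

Definition wlen_le (g : G) (n : nat) : Prop :=
  exists w : seq G, (size w <= n)%N /\ (forall s, List.In s w -> letter s) /\ word_prod w = g.

Definition generates : Prop := forall g, exists n, wlen_le g n.

Definition wlen (g : G) : nat :=
  epsilon (inhabits 0%N) (fun n => wlen_le g n /\ forall m, wlen_le g m -> (n <= m)%N).

Definition ball_G (r : nat) : set G := [set g | (wlen g <= r)%N].
End Word.

Definition card_le (T : Type) (R : realType) (A : set T) (c : R) : Prop :=
  exists s : seq T, (forall x, A x -> List.In x s) /\ (size s)%:R <= c.

Record is_metric (R : realType) (X : Type) (d : X -> X -> R) : Prop := {
  met_eq0 : forall x y, d x y = 0 <-> x = y;
  met_sym : forall x y, d x y = d y x;
  met_tri : forall x y z, d x z <= d x y + d y z }.

Record is_isom_action (R : realType) (G X : Type) (mul : G -> G -> G) (one : G)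
    (d : X -> X -> R) (act : G -> X -> X) : Prop := {
  act1 : forall x, act one x = x;
  actM : forall g h x, act (mul g h) x = act g (act h x);
  act_isom : forall g x y, d (act g x) (act g y) = d x y }.

Definition unif_bdd_stab (R : realType) (G X : Type) (act : G -> X -> X) : Prop :=
  exists N : nat, forall x : X, card_le [set g : G | act g x = x] (N%:R : R).

Definition is_centroid_map (R : realType) (G X : Type) (mul : G -> G -> G)
    (inv : G -> G) (one : G) (S : seq G) (act : G -> X -> X)
    (m : G -> G -> X) (P : {poly R}) : Prop :=
  [/\ (forall (r : nat) (h : G),
         card_le [set m g h | g in ball_G mul inv one S r] P.[r%:R]),
      (forall (r : nat) (g : G), ball_G mul inv one S r g ->
         card_le [set m g h | h in [set: G]] P.[r%:R]) &
      (forall (r : nat) (h : G),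
         card_le [set act (inv g) (m g (mul g h)) | g in ball_G mul inv one S r]
           P.[r%:R])].

Definition admits_centroid_map (R : realType) (G X : Type) (mul : G -> G -> G)
    (inv : G -> G) (one : G) (S : seq G) (act : G -> X -> X) : Prop :=
  exists (m : G -> G -> X) (P : {poly R}), is_centroid_map mul inv one S act m P.

Notation Cx R := (complex.complex R).
Definition sqnorm (R : realType) (z : Cx R) : R :=
  complex.Re z ^+ 2 + complex.Im z ^+ 2.

Definition l2sq (R : realType) (G : choiceType) (xi : G -> Cx R) : \bar R :=
  \esum_(x in [set: G]) ((sqnorm (xi x))%:E)%E.

Definition l2norm (R : realType) (G : choiceType) (xi : G -> Cx R) : \bar R :=
  match l2sq xi with
  | EFin r => EFin (Num.sqrt r)
  | _ => +oo%E
  end.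

Definition in_l2 (R : realType) (G : choiceType) (xi : G -> Cx R) : Prop :=
  (l2sq xi < +oo)%E.

(* f is an element of C[G] whose support is contained in the list s *)
Definition supp_in (R : realType) (G : choiceType) (s : seq G) (f : G -> Cx R) : Prop :=
  forall x, f x != 0 -> x \in s.

Definition conv (R : realType) (G : choiceType) (mul : G -> G -> G) (inv : G -> G)
    (s : seq G) (f xi : G -> Cx R) : G -> Cx R :=
  fun x => \sum_(y <- undup s) f y * xi (mul (inv y) x).

(* l(f) = max { l(x) : f(x) <> 0 } (0 for f = 0) *)
Definition flen (R : realType) (G : Type) (mul : G -> G -> G) (inv : G -> G) (one : G)
    (S : seq G) (f : G -> Cx R) : nat :=
  epsilon (inhabits 0%N) (fun r =>
    (forall x, f x <> 0 -> (wlen mul inv one S x <= r)%N) /\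
    forall r', (forall x, f x <> 0 -> (wlen mul inv one S x <= r')%N) -> (r <= r')%N).

(* Property RD: ||f||_op <= Q(l(f)) ||f||_2 for all f in C[G] *)
Definition property_RD (R : realType) (G : choiceType) (mul : G -> G -> G)
    (inv : G -> G) (one : G) (S : seq G) : Prop :=
  exists Q : {poly R}, forall (s : seq G) (f : G -> Cx R), supp_in s f ->
    forall xi : G -> Cx R, in_l2 xi ->
      (l2norm (conv mul inv s f xi) <=
        (Q.[(flen mul inv one S f)%:R])%:E * l2norm f * l2norm xi)%E.

From Pilot Require Import Defs.
From HB Require Import structures.
From mathcomp Require Import all_boot all_order all_algebra.
From mathcomp Require Import all_classical all_reals all_analysis.
From mathcomp Require Import complex ring lra.
From Stdlib Require Import ClassicalEpsilon.
Set Implicit Arguments. Unset Strict Implicit. Unset Printing Implicit Defensive.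
Import Order.TTheory GRing.Theory Num.Theory.
Local Open Scope classical_set_scope.
Local Open Scope ring_scope.

(* Let f be supported in the ball B(r) and xi be square summable.  For a finite
   set A of points, sum_(x in A) |f*xi(x)|^2 is at most
   sum_(x in A) sum_a |f(a)| |xi(a^-1 x)| |f*xi(x)|; group its terms according to
   the pair p = m(a, x), q = a^-1 p.  For fixed a and p, Cauchy-Schwarz in x bounds
   the inner sum by the l2-masses of xi and of f*xi on the points that can produce
   q, resp. p.  A second Cauchy-Schwarz over the pairs (p, q) leaves four
   multiplicity counts: three are the centroid conditions, and the a with a q = p
   form a coset of the stabilizer of q, so there are at most N of them.  Hence
   ||f*xi|| <= sqrt(N P(r)) P(r) ||f|| ||xi||.  Neither the metric on X nor the
   fact that S generates G plays a role. *)

Lemma sumr_sqr_ge0 (R : realDomainType) (I : Type) (r : seq I) (P : pred I) (u : I -> R) :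
  0 <= \sum_(i <- r | P i) u i ^+ 2.
Proof. by apply: sumr_ge0 => i _; exact: sqr_ge0. Qed.

Section NumSums.
Variable R : numDomainType.

Lemma ler_sum_subset (I : eqType) (r1 r2 : seq I) (w : I -> R) :
  uniq r1 -> uniq r2 -> {subset r1 <= r2} -> (forall i, 0 <= w i) ->
  \sum_(i <- r1) w i <= \sum_(i <- r2) w i.
Proof.
move=> u1 u2 sub w0; rewrite [X in _ <= X](bigID (mem r1)) /=.
have -> : \sum_(i <- r2 | i \in r1) w i = \sum_(i <- r1) w i.
  rewrite -big_filter; apply/perm_big/uniq_perm; rewrite ?filter_uniq // => i.
  by rewrite mem_filter; apply/andP/idP => [[]//|i1]; rewrite i1 sub.
by rewrite lerDl sumr_ge0.
Qed.

Lemma double_counting_le (I : eqType) (J : Type) (rI : seq I) (rJ : seq J)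
    (P : I -> J -> bool) (w : I -> R) (c : R) :
  (forall i, 0 <= w i) -> {in rI, forall i, (count (P i) rJ)%:R <= c} ->
  \sum_(j <- rJ) \sum_(i <- rI | P i j) w i <= c * \sum_(i <- rI) w i.
Proof.
move=> w0 Pc; rewrite (exchange_big_dep xpredT) //= mulr_sumr big_seq [X in _ <= X]big_seq.
apply: ler_sum => i iI; rewrite big_const_seq iter_addr_0 -mulr_natl.
by rewrite ler_wpM2r ?Pc.
Qed.

End NumSums.

Section SqrtInequalities.
Variable R : rcfType.

Lemma cauchy_schwarz (I : Type) (r : seq I) (u v : I -> R) :
  \sum_(i <- r) u i * v i <=
    Num.sqrt (\sum_(i <- r) u i ^+ 2) * Num.sqrt (\sum_(i <- r) v i ^+ 2).
Proof.
have two_terms (x y a b : R) :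
    x * y + a * b <= Num.sqrt (x ^+ 2 + a ^+ 2) * Num.sqrt (y ^+ 2 + b ^+ 2).
  apply: le_trans (ler_norm _) _.
  rewrite -sqrtr_sqr -sqrtrM ?addr_ge0 ?sqr_ge0 // ler_sqrt ?mulr_ge0 ?addr_ge0 ?sqr_ge0 //.
  rewrite -subr_ge0 (_ : _ - _ = (x * b - a * y) ^+ 2) ?sqr_ge0 //; ring.
elim: r => [|i r IH]; first by rewrite !big_nil sqrtr0 mul0r.
rewrite !big_cons; apply: le_trans (lerD (lexx (u i * v i)) IH) _.
by apply: le_trans (two_terms _ _ _ _) _; rewrite !sqr_sqrtr ?sumr_sqr_ge0.
Qed.

Lemma cauchy_schwarz_sqr (I : Type) (r : seq I) (u v : I -> R) :
  (\sum_(i <- r) u i * v i) ^+ 2 <= (\sum_(i <- r) u i ^+ 2) * \sum_(i <- r) v i ^+ 2.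
Proof.
rewrite -[X in _ <= X]sqr_sqrtr ?mulr_ge0 ?sumr_sqr_ge0 // -real_normK ?num_real //.
rewrite lerXn2r ?nnegrE ?sqrtr_ge0 // sqrtrM ?sumr_sqr_ge0 // ler_norml cauchy_schwarz andbT.
have := cauchy_schwarz r (fun i => - u i) v.
rewrite (eq_bigr (fun i => - (u i * v i))) => [|i _]; last exact: mulNr.
rewrite [X in _ <= Num.sqrt X * _ -> _](eq_bigr (fun i => u i ^+ 2)) => [|i _]; last exact: sqrrN.
by rewrite sumrN lerNl.
Qed.

Lemma sqr_sum_le_count (I : Type) (r : seq I) (P : pred I) (u : I -> R) :
  (\sum_(i <- r | P i) u i) ^+ 2 <= (count P r)%:R * \sum_(i <- r | P i) u i ^+ 2.
Proof.
rewrite -!(big_filter r P) -size_filter mulrC.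
have -> : \sum_(i <- [seq i <- r | P i]) u i = \sum_(i <- [seq i <- r | P i]) u i * 1.
  by apply: eq_bigr => i _; rewrite mulr1.
have -> : (size [seq i <- r | P i])%:R = \sum_(i <- [seq i <- r | P i]) (1 : R) ^+ 2.
  by rewrite big_const_seq iter_addr_0 count_predT expr1n.
exact: cauchy_schwarz_sqr.
Qed.

Lemma cauchy_schwarz_pairs (I J : Type) (rI : seq I) (rJ : seq J) (k : I -> J -> R)
    (u : J -> R) (v : I -> R) :
  \sum_(i <- rI) \sum_(j <- rJ) k i j * (u j * v i) <=
  Num.sqrt (\sum_(i <- rI) \sum_(j <- rJ) k i j ^+ 2) *
  Num.sqrt ((\sum_(j <- rJ) u j ^+ 2) * \sum_(i <- rI) v i ^+ 2).
Proof.
have pairsE (F : I -> J -> R) :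
    \sum_(i <- rI) \sum_(j <- rJ) F i j = \sum_(ij <- [seq (i, j) | i <- rI, j <- rJ]) F ij.1 ij.2.
  by rewrite big_allpairs.
have -> : (\sum_(j <- rJ) u j ^+ 2) * \sum_(i <- rI) v i ^+ 2 =
          \sum_(i <- rI) \sum_(j <- rJ) (u j * v i) ^+ 2.
  rewrite mulrC mulr_suml; apply: eq_bigr => i _; rewrite mulr_sumr.
  by apply: eq_bigr => j _; rewrite exprMn mulrC.
rewrite !pairsE; exact: cauchy_schwarz.
Qed.

Lemma le_sqr_of_le_mul_sqrt (t k : R) : t <= k * Num.sqrt t -> t <= k ^+ 2.
Proof.
have [t_le0 _|t_gt0] := lerP t 0; first exact: le_trans t_le0 (sqr_ge0 k).
rewrite -{1 3}(sqr_sqrtr (ltW t_gt0)) expr2 ler_pM2r ?sqrtr_gt0 // => st_le_k.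
by rewrite -expr2 lerXn2r ?nnegrE ?sqrtr_ge0 // (le_trans (sqrtr_ge0 t)).
Qed.

Lemma sqrtrM_le_add (a b : R) : 0 <= a -> 0 <= b -> Num.sqrt (a * b) <= a + b.
Proof.
move=> a0 b0; rewrite -(ger0_norm (addr_ge0 a0 b0)) -sqrtr_sqr ler_sqrt ?sqr_ge0 //.
by nra.
Qed.

End SqrtInequalities.

Lemma big_partition_seq (R : Type) (idx : R) (op : Monoid.com_law idx) (I J : eqType)
    (r : seq I) (P : pred I) (rJ : seq J) (h : I -> J) (F : I -> R) :
  uniq rJ -> (forall i, i \in r -> P i -> h i \in rJ) ->
  \big[op/idx]_(i <- r | P i) F i =
  \big[op/idx]_(j <- rJ) \big[op/idx]_(i <- r | P i && (h i == j)) F i.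
Proof.
move=> uJ hJ; rewrite (exchange_big_dep P) //=; last by move=> j i _ /andP[].
rewrite big_seq_cond [RHS]big_seq_cond; apply: eq_bigr => i /andP[ri Pi].
rewrite big_const_seq (_ : count _ _ = 1%N) /= ?Monoid.mulm1 //.
rewrite (@eq_count _ _ (pred1 (h i))) => [|j]; last by rewrite /= Pi eq_sym.
by rewrite count_uniq_mem // hJ.
Qed.
Arguments big_partition_seq {R idx op I J} r P rJ h {F}.

Lemma In_mem (T : eqType) (x : T) (s : seq T) : List.In x s -> x \in s.
Proof.
elim: s => [|y s IH] //= [->|/IH]; first by rewrite inE eqxx.
by rewrite inE => ->; rewrite orbT.
Qed.

Section CardLe.
Variable R : realType.

Lemma card_le_ge0 (T : Type) (Y : set T) (c : R) : Defs.card_le Y c -> 0 <= c.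
Proof. by move=> [s [_ sc]]; apply: le_trans sc. Qed.

Lemma card_le_count (T : eqType) (Y : set T) (c : R) (P : pred T) (L : seq T) :
  Defs.card_le Y c -> uniq L -> (forall y, y \in L -> P y -> Y y) -> (count P L)%:R <= c.
Proof.
move=> [s [sY sc]] uL LY; apply: le_trans sc; rewrite ler_nat -size_filter.
apply: uniq_leq_size; first by rewrite filter_uniq.
by move=> y; rewrite mem_filter => /andP[Py yL]; apply/In_mem/sY/LY.
Qed.

End CardLe.

Section GroupAction.
Variables (G X : Type) (mul : G -> G -> G) (inv : G -> G) (one : G) (act : G -> X -> X).
Hypothesis Hg : is_group mul inv one.
Hypothesis act1 : forall x, act one x = x.
Hypothesis actM : forall g h x, act (mul g h) x = act g (act h x).

Lemma grp_mulgV x : mul x (inv x) = one.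
Proof.
have -> : mul x (inv x) = mul (mul (inv (inv x)) (inv x)) (mul x (inv x)).
  by rewrite (grp_mulV Hg) (grp_mul1 Hg).
rewrite -(grp_assoc Hg) (grp_assoc Hg (inv x) x) (grp_mulV Hg) (grp_mul1 Hg).
exact: (grp_mulV Hg).
Qed.

Lemma grp_mulKVg a x : mul a (mul (inv a) x) = x.
Proof. by rewrite (grp_assoc Hg) grp_mulgV (grp_mul1 Hg). Qed.

Lemma actKV a p : act a (act (inv a) p) = p.
Proof. by rewrite -actM grp_mulgV act1. Qed.

Lemma card_le_transporter (R : realType) (c : R) :
  (forall x, Defs.card_le [set g | act g x = x] c) ->
  forall p q, Defs.card_le [set g | act g q = p] c.
Proof.
move=> stab p q; have [s [s_stab sc]] := stab q.
have [[a aqp]|no_a] := pselect (exists a, act a q = p); last first.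
  by exists [::]; split=> [g gqp|]; [apply: no_a; exists g | exact: card_le_ge0 (stab q)].
exists (map (mul a) s); split; last by rewrite size_map.
move=> g gqp; rewrite -(grp_mulKVg a g); apply/List.in_map/s_stab => /=.
by rewrite actM gqp -aqp -actM (grp_mulV Hg) act1.
Qed.

End GroupAction.

Section SquareSummable.
Variables (R : realType) (G : choiceType).
Implicit Types (g : G -> Cx R) (s L : seq G).

Lemma sqnormE (z : Cx R) : sqnorm z = Normc.normc z ^+ 2.
Proof. by case: z => a b; rewrite /sqnorm /= sqr_sqrtr // addr_ge0 ?sqr_ge0. Qed.

Lemma normc_ge0 (z : Cx R) : 0 <= Normc.normc z.
Proof. by case: z => a b; rewrite /= sqrtr_ge0. Qed.

Lemma normc_sum (I : Type) (r : seq I) (h : I -> Cx R) :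
  Normc.normc (\sum_(i <- r) h i) <= \sum_(i <- r) Normc.normc (h i).
Proof.
elim: r => [|i r IH]; first by rewrite !big_nil Normc.normc0.
by rewrite !big_cons; apply: le_trans (le_normcD _ _) _; rewrite lerD2l.
Qed.

Lemma l2sq_ge0 g : (0 <= l2sq g)%E.
Proof. by apply: esum_ge0 => x _; rewrite lee_fin sqnormE sqr_ge0. Qed.

Lemma l2sq_lb g L : uniq L -> ((\sum_(x <- L) sqnorm (g x))%:E <= l2sq g)%E.
Proof.
move=> uL; apply: esum_ge; exists [set` L]; first by split => //; exact: finite_seq.
by rewrite -sumEFin fsbig_seq.
Qed.

Lemma l2sq_ub g (c : R) :
  (forall L, uniq L -> \sum_(x <- L) sqnorm (g x) <= c) -> (l2sq g <= c%:E)%E.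
Proof.
move=> gc; apply: ge_ereal_sup => _ [Y [finY _] <-].
by rewrite fsbig_finite // sumEFin lee_fin gc // finmap.fset_uniq.
Qed.

Lemma l2sq_supp g s : supp_in s g -> (l2sq g <= (\sum_(x <- undup s) sqnorm (g x))%:E)%E.
Proof.
move=> sg; apply: l2sq_ub => L uL; rewrite (bigID (mem (undup s))) /=.
rewrite [X in _ + X]big1 => [|x]; last first.
  rewrite mem_undup => xs; have -> : g x = 0 by apply/eqP; apply: contraNT xs => /sg.
  by rewrite sqnormE Normc.normc0 expr0n.
rewrite addr0 -big_filter; apply: ler_sum_subset => [||x|x].
- exact: filter_uniq.
- exact: undup_uniq.
- by rewrite mem_filter => /andP[].
- by rewrite sqnormE sqr_ge0.
Qed.

Lemma in_l2_supp g s : supp_in s g -> in_l2 g.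
Proof. by move/l2sq_supp/le_lt_trans; apply; rewrite ltry. Qed.

Lemma l2sqE g : in_l2 g -> l2sq g = (fine (l2sq g))%:E.
Proof. by move=> g2; rewrite fineK // ge0_fin_numE ?l2sq_ge0. Qed.

Lemma l2normE g : in_l2 g -> l2norm g = (Num.sqrt (fine (l2sq g)))%:E.
Proof. by move=> g2; rewrite /l2norm l2sqE. Qed.

Lemma sum_sqnorm_le g L : in_l2 g -> uniq L -> \sum_(x <- L) sqnorm (g x) <= fine (l2sq g).
Proof. by move=> g2 uL; rewrite -lee_fin -l2sqE ?l2sq_lb. Qed.

Lemma l2norm_le g (c : R) : 0 <= c -> (l2sq g <= (c ^+ 2)%:E)%E -> (l2norm g <= c%:E)%E.
Proof.
move=> c0 gc; have g2 : in_l2 g by apply: le_lt_trans gc _; rewrite ltry.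
rewrite l2normE // lee_fin -(ger0_norm c0) -sqrtr_sqr ler_sqrt ?sqr_ge0 //.
by rewrite -lee_fin -l2sqE.
Qed.

End SquareSummable.

Lemma flen_spec (R : realType) (G : choiceType) (mul : G -> G -> G) (inv : G -> G)
    (one : G) (S : seq G) (s : seq G) (f : G -> Cx R) :
  supp_in s f -> forall x, f x <> 0 -> (wlen mul inv one S x <= flen mul inv one S f)%N.
Proof.
move=> sf.
pose bounds r := forall x, f x <> 0 -> (wlen mul inv one S x <= r)%N.
have bounded : exists r, `[< bounds r >].
  exists (\max_(y <- s) wlen mul inv one S y); apply/asboolP => x fx.
  by apply: leq_bigmax_seq => //; apply: sf; apply/eqP.
have least : exists r, bounds r /\ forall r', bounds r' -> (r <= r')%N.
  have [r /asboolP br r_min] := ex_minnP bounded.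
  by exists r; split => // r' br'; apply/r_min/asboolP.
by have [] := epsilon_spec (inhabits 0%N) _ least.
Qed.

Section CentroidBound.
Variables (R : realType) (G : choiceType) (X : eqType) (mul : G -> G -> G) (inv : G -> G)
  (act : G -> X -> X) (m : G -> G -> X).
Hypothesis mulKVg : forall a x, mul a (mul (inv a) x) = x.
Hypothesis actKV : forall a p, act a (act (inv a) p) = p.
Variables (D : set G) (Pr Nr : R).
Hypotheses (Pr_ge0 : 0 <= Pr) (Nr_ge0 : 0 <= Nr).
Hypothesis card_m_l : forall x, Defs.card_le [set m a x | a in D] Pr.
Hypothesis card_m_r : forall a, D a -> Defs.card_le [set m a x | x in [set: G]] Pr.
Hypothesis card_m_shift :
  forall b, Defs.card_le [set act (inv a) (m a (mul a b)) | a in D] Pr.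
Hypothesis card_transporter : forall p q, Defs.card_le [set a | act a q = p] Nr.

Section Counting.
Variables (us A Bs : seq G) (F Xi H : G -> R).
Hypotheses (us_uniq : uniq us) (A_uniq : uniq A) (Bs_uniq : uniq Bs).
Hypothesis us_sub : forall a, a \in us -> D a.
Hypothesis Bs_sub : forall a x, a \in us -> x \in A -> mul (inv a) x \in Bs.
Hypothesis F_ge0 : forall a, 0 <= F a.

Let hit a p := has (fun x => m a x == p) A.
Let Ps := undup [seq m a x | a <- us, x <- A].
Let Qs := undup [seq act (inv a) (m a x) | a <- us, x <- A].
Let massH p := \sum_(x <- A | has (fun a => m a x == p) us) H x ^+ 2.
Let massXi q := \sum_(b <- Bs | has (fun a => act (inv a) (m a (mul a b)) == q) us) Xi b ^+ 2.
Let weightF p q := \sum_(a <- us | hit a p && (act (inv a) p == q)) F a.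

Lemma sum_fiber_le a p : a \in us ->
  \sum_(x <- A | m a x == p) Xi (mul (inv a) x) * H x <=
  Num.sqrt (massXi (act (inv a) p)) * Num.sqrt (massH p).
Proof.
move=> ua; rewrite -big_filter; apply: le_trans (cauchy_schwarz _ _ _) _.
apply: ler_pM; rewrite ?sqrtr_ge0 // ler_sqrt ?sumr_sqr_ge0 //.
- rewrite -(big_map (mul (inv a)) xpredT (fun b => Xi b ^+ 2)) /massXi -(big_filter Bs).
  apply: ler_sum_subset => [||b|b]; last exact: sqr_ge0.
  + rewrite map_inj_uniq ?filter_uniq // => x y /(congr1 (mul a)).
    by rewrite !mulKVg.
  + exact: filter_uniq.
  + case/mapP=> x; rewrite mem_filter => /andP[/eqP mp xA] ->.
    rewrite mem_filter Bs_sub // andbT; apply/hasP; exists a => //.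
    by rewrite mulKVg mp.
- rewrite /massH -(big_filter A); apply: ler_sum_subset => [||x|x]; last exact: sqr_ge0.
  + exact: filter_uniq.
  + exact: filter_uniq.
  + rewrite !mem_filter => /andP[mp ->]; rewrite andbT.
    by apply/hasP; exists a.
Qed.

Lemma sum_massH_le : \sum_(p <- Ps) massH p <= Pr * \sum_(x <- A) H x ^+ 2.
Proof.
apply: (double_counting_le (P := fun x p => has (fun a => m a x == p) us)) => [x|x _].
  exact: sqr_ge0.
apply: card_le_count (card_m_l x) (undup_uniq _) _ => p _ /hasP[a ua /eqP <-].
by exists a => //; apply: us_sub.
Qed.

Lemma sum_massXi_le : \sum_(q <- Qs) massXi q <= Pr * \sum_(b <- Bs) Xi b ^+ 2.
Proof.
apply: (double_counting_le
  (P := fun b q => has (fun a => act (inv a) (m a (mul a b)) == q) us)) => [b|b _].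
  exact: sqr_ge0.
apply: card_le_count (card_m_shift b) (undup_uniq _) _ => q _ /hasP[a ua /eqP <-].
by exists a => //; apply: us_sub.
Qed.

Lemma weightF_sqr_le p q :
  weightF p q ^+ 2 <= Nr * \sum_(a <- us | hit a p && (act (inv a) p == q)) F a ^+ 2.
Proof.
apply: le_trans (sqr_sum_le_count _ _ _) _.
apply: ler_wpM2r; first exact: sumr_sqr_ge0.
apply: card_le_count (card_transporter p q) us_uniq _ => a _ /andP[_ /eqP <-].
exact: actKV.
Qed.

Lemma sum_weightF_sqr_le :
  \sum_(p <- Ps) \sum_(q <- Qs) weightF p q ^+ 2 <= Nr * (Pr * \sum_(a <- us) F a ^+ 2).
Proof.
have one_q_per_a p : \sum_(q <- Qs) \sum_(a <- us | hit a p && (act (inv a) p == q)) F a ^+ 2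
    <= \sum_(a <- us | hit a p) F a ^+ 2.
  rewrite -[X in _ <= X]mul1r -[X in _ <= 1 * X]big_filter.
  rewrite (eq_bigr (fun q => \sum_(a <- [seq a <- us | hit a p] | act (inv a) p == q) F a ^+ 2));
    last by move=> q _; rewrite big_filter_cond.
  apply: double_counting_le => [a|a _]; first exact: sqr_ge0.
  rewrite (@eq_count _ _ (pred1 (act (inv a) p))) => [|q]; last by rewrite /= eq_sym.
  by rewrite count_uniq_mem ?undup_uniq // lern1 leq_b1.
apply: (@le_trans _ _ (\sum_(p <- Ps) Nr * \sum_(a <- us | hit a p) F a ^+ 2)).
  apply: ler_sum => p _; apply: le_trans (ler_sum _ (fun q _ => weightF_sqr_le p q)) _.
  by rewrite -mulr_sumr ler_wpM2l ?one_q_per_a.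
rewrite -mulr_sumr ler_wpM2l //.
apply: (double_counting_le (P := hit)) => [a|a ua]; first exact: sqr_ge0.
apply: card_le_count (card_m_r (us_sub ua)) (undup_uniq _) _ => p _ /hasP[x _ /eqP <-].
by exists x.
Qed.

Lemma sum_le_centroid_pairs :
  \sum_(x <- A) \sum_(a <- us) F a * Xi (mul (inv a) x) * H x <=
  \sum_(p <- Ps) \sum_(q <- Qs) weightF p q * (Num.sqrt (massXi q) * Num.sqrt (massH p)).
Proof.
have Ps_m a x : a \in us -> x \in A -> m a x \in Ps.
  by move=> ua xA; rewrite mem_undup; apply: allpairs_f.
have Qs_act a p : a \in us -> hit a p -> act (inv a) p \in Qs.
  move=> ua /hasP[x xA /eqP <-]; rewrite mem_undup.
  exact: (allpairs_f (fun a x => act (inv a) (m a x))).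
apply: (@le_trans _ _ (\sum_(a <- us) \sum_(p <- Ps | hit a p)
    F a * (Num.sqrt (massXi (act (inv a) p)) * Num.sqrt (massH p)))).
  rewrite exchange_big /= big_seq [X in _ <= X]big_seq; apply: ler_sum => a ua.
  rewrite (big_partition_seq A xpredT Ps (m a) (undup_uniq _) (fun x xA _ => Ps_m a x ua xA)).
  rewrite [X in _ <= X]big_mkcond; apply: ler_sum => p _ /=.
  case: ifP => [hap|/negbT nhap]; last by rewrite big_hasC.
  under eq_bigr do rewrite -mulrA.
  by rewrite -mulr_sumr ler_wpM2l ?sum_fiber_le.
rewrite (exchange_big_dep xpredT) //=; apply: ler_sum => p _.
rewrite (big_partition_seq us _ Qs _ (undup_uniq _) (fun a ua => Qs_act a p ua)).
apply: ler_sum => q _; rewrite /weightF mulr_suml.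
by apply: ler_sum => a /andP[_ /eqP ->].
Qed.

Lemma centroid_sum_le :
  \sum_(x <- A) \sum_(a <- us) F a * Xi (mul (inv a) x) * H x <=
  Num.sqrt (Nr * Pr) * Pr * Num.sqrt (\sum_(a <- us) F a ^+ 2) *
  Num.sqrt (\sum_(b <- Bs) Xi b ^+ 2) * Num.sqrt (\sum_(x <- A) H x ^+ 2).
Proof.
apply: le_trans sum_le_centroid_pairs _; apply: le_trans (cauchy_schwarz_pairs _ _ _ _ _) _.
have -> : \sum_(q <- Qs) Num.sqrt (massXi q) ^+ 2 = \sum_(q <- Qs) massXi q.
  by apply: eq_bigr => q _; rewrite sqr_sqrtr ?sumr_sqr_ge0.
have -> : \sum_(p <- Ps) Num.sqrt (massH p) ^+ 2 = \sum_(p <- Ps) massH p.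
  by apply: eq_bigr => p _; rewrite sqr_sqrtr ?sumr_sqr_ge0.
apply: (@le_trans _ _ (Num.sqrt (Nr * (Pr * \sum_(a <- us) F a ^+ 2)) *
  Num.sqrt ((Pr * \sum_(b <- Bs) Xi b ^+ 2) * (Pr * \sum_(x <- A) H x ^+ 2)))).
  apply: ler_pM; rewrite ?sqrtr_ge0 // ler_sqrt ?mulr_ge0 ?sumr_sqr_ge0 ?sum_weightF_sqr_le //.
  by apply: ler_pM; rewrite ?sumr_ge0 ?sum_massXi_le ?sum_massH_le // => *; exact: sumr_sqr_ge0.
rewrite mulrA sqrtrM ?mulr_ge0 // mulrACA -expr2.
rewrite [Num.sqrt (Pr ^+ 2 * _)]sqrtrM ?sqr_ge0 // sqrtr_sqr ger0_norm //.
rewrite [Num.sqrt (_ * \sum_(x <- A) _)]sqrtrM ?sumr_sqr_ge0 // !mulrA.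
by rewrite (mulrAC _ (Num.sqrt (\sum_(a <- us) F a ^+ 2)) Pr).
Qed.

End Counting.

Variables (s : seq G) (f xi : G -> Cx R).
Hypotheses (sf : supp_in s f) (fD : forall a, f a != 0 -> D a) (xi2 : in_l2 xi).

Let cv := Defs.conv mul inv s f xi.
Let us := [seq a <- undup s | f a != 0].

Lemma normc_conv_le x :
  Normc.normc (cv x) <= \sum_(a <- us) Normc.normc (f a) * Normc.normc (xi (mul (inv a) x)).
Proof.
apply: le_trans (normc_sum _ _) _; rewrite big_filter [X in _ <= X]big_mkcond /=.
apply: ler_sum => a _; rewrite Normc.normcM.
by case: eqP => [->|_]; rewrite ?Normc.normc0 ?mul0r.
Qed.

Lemma l2sq_conv_le :
  (l2sq cv <= ((Num.sqrt (Nr * Pr) * Pr * Num.sqrt (fine (l2sq f)) *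
                Num.sqrt (fine (l2sq xi))) ^+ 2)%:E)%E.
Proof.
have us_uniq : uniq us by rewrite filter_uniq ?undup_uniq.
have sum_f_le : \sum_(a <- us) Normc.normc (f a) ^+ 2 <= fine (l2sq f).
  by under eq_bigr do rewrite -sqnormE; exact: sum_sqnorm_le (in_l2_supp sf) us_uniq.
apply: l2sq_ub => A uA; under eq_bigr do rewrite sqnormE.
pose Bs := undup [seq mul (inv a) x | a <- us, x <- A].
have sum_xi_le : \sum_(b <- Bs) Normc.normc (xi b) ^+ 2 <= fine (l2sq xi).
  by under eq_bigr do rewrite -sqnormE; exact: sum_sqnorm_le xi2 (undup_uniq _).
have us_D a : a \in us -> D a by rewrite mem_filter => /andP[/fD].
have Bs_sub a x : a \in us -> x \in A -> mul (inv a) x \in Bs.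
  by move=> ua xA; rewrite mem_undup; apply: (allpairs_f (fun a x => mul (inv a) x)).
have := centroid_sum_le (us := us) (Bs := Bs) (fun b => Normc.normc (xi b))
  (fun x => Normc.normc (cv x)) us_uniq uA (undup_uniq _) us_D Bs_sub (fun a => normc_ge0 (f a)).
move=> core; apply: le_sqr_of_le_mul_sqrt; apply: le_trans (le_trans _ core) _.
  apply: ler_sum => x _; rewrite expr2 -mulr_suml ler_wpM2r ?normc_ge0 //.
  exact: normc_conv_le.
rewrite ler_wpM2r ?sqrtr_ge0 //; apply: ler_pM; rewrite ?mulr_ge0 ?sqrtr_ge0 //.
- by rewrite ler_wpM2l ?mulr_ge0 ?sqrtr_ge0 // ler_sqrt // fine_ge0 ?l2sq_ge0.
- by rewrite ler_sqrt // fine_ge0 ?l2sq_ge0.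
Qed.

Lemma l2norm_conv_le :
  (l2norm cv <= (Num.sqrt (Nr * Pr) * Pr * Num.sqrt (fine (l2sq f)) *
                 Num.sqrt (fine (l2sq xi)))%:E)%E.
Proof. by apply: l2norm_le l2sq_conv_le; rewrite !mulr_ge0 ?sqrtr_ge0. Qed.

End CentroidBound.

Theorem theorem3 (R : realType) (G : choiceType) (mul : G -> G -> G) (inv : G -> G)
    (one : G) (Hgrp : is_group mul inv one) (S : seq G)
    (HS : generates mul inv one S)
    (X : Type) (d : X -> X -> R) (Hd : is_metric d)
    (act : G -> X -> X) (Hact : is_isom_action mul one d act)
    (Hstab : unif_bdd_stab R act) :
  admits_centroid_map R mul inv one S act ->
  property_RD R mul inv one S.
Proof.
move=> [m [P [cm1 cm2 cm3]]]; have [N stabN] := Hstab.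
exists (((N%:R)%:P + P) * P); move=> s f sf xi xi2.
set r := flen mul inv one S f.
have Pr_ge0 : 0 <= P.[r%:R] := card_le_ge0 (cm1 r one).
have N_ge0 : 0 <= (N%:R : R) := ler0n _ _.
have fD a : f a != 0 -> ball_G mul inv one S r a by move=> /eqP; exact: flen_spec sf a.
have := l2norm_conv_le (X := {classic X}) (grp_mulKVg Hgrp)
  (actKV Hgrp (act1 Hact) (actM Hact)) Pr_ge0 N_ge0 (cm1 r) (cm2 r) (cm3 r)
  (card_le_transporter Hgrp (act1 Hact) (actM Hact) stabN) sf fD xi2.
move/le_trans; apply.
rewrite (l2normE (in_l2_supp sf)) (l2normE xi2) -!EFinM lee_fin.
rewrite hornerM hornerD hornerC !ler_wpM2r ?sqrtr_ge0 ?sqrtrM_le_add //.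
Qed.
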